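(* Let $G$ be a simple planar brick with six vertices. Then $G$ is wheel-like if and only if $G$ is isomorphic to the wheel $W_5$.
   Context: A graph is matching covered if it is connected, has at least two vertices, and every edge lies in a perfect matching. A cut $\partial(X)$ (edges with exactly one end in $X$) is tight if every perfect matching contains exactly one of its edges, trivial if one side has one vertex. A brick is a nonbipartite matching covered graph whose tight cuts are all trivial. An edge $e$ is removable if $G-e$ is matching covered; a pair $\{e,f\}$ is a removable doubleton if $G-e-f$ is matching covered but neither $G-e$ nor $G-f$ is; these are the removable classes. A brick $G$ is wheel-like if there is a vertex $h$ such that every removable class contains an edge incident with $h$. The wheel $W_5$ is obtained from a $5$-cycle by adding a new vertex adjacent to all five cycle vertices. *)

From mathcomp Require Import all_boot all_fingroup.
Set Implicit Arguments. Unset Strict Implicit. Unset Printing Implicit Defensive.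

Section Graphs.
Variable T : finType.
Implicit Types (E M : {set {set T}}) (X : {set T}).

Definition simple_edges E := forall f, f \in E -> #|f| = 2.

Definition adj E : rel T := fun u v => [set u; v] \in E.

Definition connected E := forall x y : T, connect (adj E) x y.

Definition perfect_matching E M :=
  M \subset E /\ forall v : T, #|[set f in M | v \in f]| = 1.

Definition matching_covered E :=
  connected E /\ 1 < #|T| /\
  forall f, f \in E -> exists M, perfect_matching E M /\ f \in M.

Definition cut E X := [set f in E | #|f :&: X| == 1].

Definition tight_cut E X :=
  forall M, perfect_matching E M -> #|M :&: cut E X| = 1.

Definition trivial_cut X := #|X| = 1 \/ #|~: X| = 1.

Definition bipartite E := exists X, E \subset cut E X.

Definition brick E :=
  matching_covered E /\ ~ bipartite E /\
  forall X, tight_cut E X -> trivial_cut X.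

Definition removable E f := f \in E /\ matching_covered (E :\ f).

Definition removable_doubleton E f g :=
  f \in E /\ g \in E /\ f != g /\
  matching_covered (E :\ f :\ g) /\
  ~ matching_covered (E :\ f) /\ ~ matching_covered (E :\ g).

Definition wheel_like E :=
  exists h : T,
    (forall f, removable E f -> h \in f) /\
    (forall f g, removable_doubleton E f g -> (h \in f) \/ (h \in g)).

(* Planarity, combinatorially: a rotation system (a permutation [s] of the
   darts cyclically permuting the darts leaving each vertex) whose faces
   (orbits of the face-tracing map d |-> s (reverse d)) satisfy Euler's
   formula V - E + F = 2.  This is the genus-0 criterion for connected graphs
   (all graphs considered here are bricks, hence connected). *)
Definition dart E (d : T * T) := [set d.1; d.2] \in E.

Definition rotation_system E (s : {perm (T * T)}) :=
  [/\ forall d, ~~ dart E d -> s d = d,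
      forall d, dart E d -> (s d).1 = d.1 /\ dart E (s d)
    & forall d d', dart E d -> dart E d' -> d.1 = d'.1 ->
        exists k, iter k s d = d'].

Definition face_map E (s : {perm (T * T)}) (d : T * T) : T * T :=
  if dart E d then s (d.2, d.1) else d.

Definition nfaces E (s : {perm (T * T)}) :=
  #|[set [set d' | fconnect (face_map E s) d d'] | d in [set d | dart E d]]|.

Definition planar E :=
  exists s : {perm (T * T)}, rotation_system E s /\ #|T| + nfaces E s = #|E| + 2.

End Graphs.

(* The wheel W_5 on vertex set 'I_6: hub 0, rim cycle 1-2-3-4-5-1. *)
Definition w5adj (i j : 'I_6) : bool :=
  (i != j) &&
  [|| (i == 0 :> nat), (j == 0 :> nat),
      ((i + 5 - j) %% 5 == 1) | ((j + 5 - i) %% 5 == 1)].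

Definition W5 : {set {set 'I_6}} :=
  [set [set p.1; p.2] | p in [set p : 'I_6 * 'I_6 | w5adj p.1 p.2]].

Definition isomorphic (T T' : finType) (E : {set {set T}}) (E' : {set {set T'}}) :=
  exists phi : T -> T', bijective phi /\
    forall x y : T, ([set x; y] \in E) = ([set phi x; phi y] \in E').

From mathcomp Require Import all_boot all_fingroup zify.

Set Implicit Arguments. Unset Strict Implicit. Unset Printing Implicit Defensive.

(* A simple graph on six vertices is, once its vertices are numbered, a subgraph of K6, and
   everything in the statement -- matching coveredness, tight cuts, removable edges and
   removable doubletons -- is determined by which of the fifteen perfect matchings of K6
   survive in it.  The theorem is therefore a finite check over the 2^15 subgraphs of K6:
   each one that is matching covered, has no nontrivial tight cut and is wheel-like is a
   relabelling of W5, and every relabelling of W5 is wheel-like. *)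

Notation edge := (nat * nat)%type.

Fixpoint subseqs {A : Type} (s : seq A) : seq (seq A) :=
  if s is x :: s' then let r := subseqs s' in r ++ map (cons x) r else [:: [::]].

Lemma mem_subseqs_filter (A : eqType) (a : pred A) (s : seq A) :
  filter a s \in subseqs s.
Proof.
elim: s => [|x s IHs] //=; rewrite mem_cat.
by case: (a x); rewrite ?IHs // (map_f (cons x)) ?orbT.
Qed.

Lemma subseqs_subseq (A : eqType) (s t : seq A) : t \in subseqs s -> subseq t s.
Proof.
elim: s t => [|x s IHs] t /=; first by rewrite inE => /eqP ->.
rewrite mem_cat => /orP[/IHs ts | /mapP[u /IHs us ->]].
  exact: subseq_trans ts (subseq_cons s x).
by rewrite /= eqxx.
Qed.

Definition K6 : seq edge :=
  [seq e <- [seq (i, j) | i <- iota 0 6, j <- iota 0 6] | e.1 < e.2].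

Lemma mem_K6 (e : edge) : (e \in K6) = (e.1 < e.2 < 6).
Proof.
case: e => i j; rewrite mem_filter; case: (ltnP i j) => [lt_ij|] //.
apply/allpairsP/andP => [[[a b] [_ bI [_ ->]]] | [_ lt_j6]].
  by move: bI; rewrite mem_iota.
by exists (i, j); rewrite !mem_iota (ltn_trans lt_ij lt_j6) lt_j6.
Qed.

Lemma K6_uniq : uniq K6. Proof. by []. Qed.

Definition incident (v : nat) (e : edge) := (v == e.1) || (v == e.2).

Definition perfect_matchingb (m : seq edge) := all (fun v => count (incident v) m == 1) (iota 0 6).

Definition K6_pms : seq (seq edge) :=
  [:: [:: (0, 5); (1, 4); (2, 3)]; [:: (0, 5); (1, 3); (2, 4)]; [:: (0, 5); (1, 2); (3, 4)];
      [:: (0, 4); (1, 5); (2, 3)]; [:: (0, 4); (1, 3); (2, 5)]; [:: (0, 4); (1, 2); (3, 5)];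
      [:: (0, 3); (1, 5); (2, 4)]; [:: (0, 3); (1, 4); (2, 5)]; [:: (0, 3); (1, 2); (4, 5)];
      [:: (0, 2); (1, 5); (3, 4)]; [:: (0, 2); (1, 4); (3, 5)]; [:: (0, 2); (1, 3); (4, 5)];
      [:: (0, 1); (2, 5); (3, 4)]; [:: (0, 1); (2, 4); (3, 5)]; [:: (0, 1); (2, 3); (4, 5)]].

Lemma K6_pmsE : K6_pms = [seq m <- subseqs K6 | perfect_matchingb m].
Proof. by vm_compute. Qed.

Lemma K6_pmsP (m : seq edge) :
  m \in K6_pms -> perfect_matchingb m /\ m = [seq e <- K6 | e \in m].
Proof.
rewrite K6_pmsE mem_filter => /andP[pm_m /subseqs_subseq].
by move/(subseq_uniqP K6_uniq).
Qed.

Definition pmatchings (g : seq edge) := [seq m <- K6_pms | all [in g] m].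

Lemma pmatchings_rem g f : uniq g ->
  pmatchings (rem f g) = [seq m <- pmatchings g | f \notin m].
Proof.
move=> g_uniq; rewrite /pmatchings -filter_predI; apply: eq_filter => m /=.
rewrite -has_pred1 -all_predC -all_predI; apply: eq_all => e /=.
by rewrite rem_filter // mem_filter /= eq_sym.
Qed.

Definition covered (P : seq (seq edge)) (g : seq edge) :=
  all (fun e => has (fun m => e \in m) P) g.

Definition adjb (g : seq edge) (u v : nat) := ((u, v) \in g) || ((v, u) \in g).

Definition grow (g : seq edge) (S : seq nat) :=
  undup (S ++ [seq e.2 | e <- g & e.1 \in S] ++ [seq e.1 | e <- g & e.2 \in S]).

Definition reach (g : seq edge) (n : nat) := iter n (grow g) [:: 0].

Lemma mem_grow g S v : (v \in grow g S) = (v \in S) || has (adjb g ^~ v) S.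
Proof.
rewrite mem_undup !mem_cat; congr (_ || _); apply/orP/hasP.
  case=> /mapP[[a b]]; rewrite mem_filter => /andP[/= aS gab] ->.
    by exists a; rewrite // /adjb gab.
  by exists b; rewrite // /adjb gab orbT.
case=> u uS /orP[guv|gvu]; [left|right]; apply/mapP.
  by exists (u, v); rewrite // mem_filter uS.
by exists (v, u); rewrite // mem_filter uS.
Qed.

Lemma reach_monotone g m n v : m <= n -> v \in reach g m -> v \in reach g n.
Proof.
move/subnK <-; elim: (n - m) => // k IHk /IHk.
by rewrite addSn /reach iterS mem_grow => ->.
Qed.

Lemma mem_reach_path g p : path (adjb g) 0 p -> last 0 p \in reach g (size p).
Proof.
elim/last_ind: p => [|p v IHp] //; rewrite rcons_path last_rcons size_rcons.
case/andP=> /IHp reach_u adj_uv; rewrite /reach iterS mem_grow.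
by apply/orP; right; apply/hasP; exists (last 0 p).
Qed.

Lemma reach_ind (P : pred nat) g n :
  P 0 -> (forall u v, P u -> adjb g u v -> P v) -> {in reach g n, forall v, P v}.
Proof.
move=> P0 PS; elim: n => [|n IHn] v; first by rewrite inE => /eqP ->.
rewrite /reach iterS mem_grow => /orP[/IHn//|/hasP[u /IHn]]; exact: PS.
Qed.

Definition connectedb (g : seq edge) := let R := reach g 5 in all [in R] (iota 0 6).

(* [vm_compute] evaluates call by value, so [&&] does not short-circuit: the explicit [if]s
   here and below, and the staged filters of [six_vertex_check], keep the search fast. *)
Definition matching_coveredb (g : seq edge) :=
  if covered (pmatchings g) g then connectedb g else false.

Definition removables (g : seq edge) :=
  let P := pmatchings g in
  [seq f <- g | if covered [seq m <- P | f \notin m] (rem f g)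
                then connectedb (rem f g) else false].

Definition doubletons (g : seq edge) (R : seq edge) :=
  let P := pmatchings g in
  let N := [seq f <- g | f \notin R] in
  [seq p <- [seq (f, f') | f <- N, f' <- N] |
    if p.1 == p.2 then false else
    if covered [seq m <- P | (p.1 \notin m) && (p.2 \notin m)] (rem p.2 (rem p.1 g))
    then connectedb (rem p.2 (rem p.1 g)) else false].

Definition wheel_likeb (g : seq edge) :=
  let R := removables g in
  let D := doubletons g R in
  has (fun h => all (incident h) R && all (fun p => incident h p.1 || incident h p.2) D)
      (iota 0 6).

Lemma mem_removables g f : uniq g ->
  (f \in removables g) = (f \in g) && matching_coveredb (rem f g).
Proof. by move=> g_uniq; rewrite mem_filter andbC /matching_coveredb pmatchings_rem. Qed.

Lemma mem_doubletons g f f' : uniq g -> ((f, f') \in doubletons g (removables g)) =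
  [&& f \in g, f' \in g, f != f', matching_coveredb (rem f' (rem f g)),
      ~~ matching_coveredb (rem f g) & ~~ matching_coveredb (rem f' g)].
Proof.
move=> g_uniq; have P2 : pmatchings (rem f' (rem f g)) =
    [seq m <- pmatchings g | (f \notin m) && (f' \notin m)].
  by rewrite !pmatchings_rem ?rem_uniq // -filter_predI; apply: eq_filter => m /=; rewrite andbC.
rewrite mem_filter /= -P2 -/(matching_coveredb _).
have [<-|ff'] := eqVneq f f'; first by rewrite /= !andbF.
apply/andP/and5P => [[mc]|].
  case/allpairsP => -[a b] [/=]; rewrite [a \in _]mem_filter [b \in _]mem_filter.
  rewrite !mem_removables //.
  case/andP=> na ag /andP[nb bg] [? ?]; subst.
  by move: na nb; rewrite ag bg /= => na nb; split=> //; apply/andP.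
case=> fg f'g _ mc /andP[nf nf']; split=> //.
apply/allpairsP; exists (f, f'); rewrite [f \in _]mem_filter [f' \in _]mem_filter.
by rewrite !mem_removables // fg f'g nf nf'.
Qed.

Definition crosses (X : seq nat) (e : edge) := (e.1 \in X) != (e.2 \in X).

(* A shore of even size is crossed an even number of times by every perfect matching, and
   the cut of X is the cut of its complement; so only 3-sets containing 0 can be shores of
   nontrivial tight cuts.  [tight_cut_freeb_code] holds for any list of nontrivial shores. *)
Definition shores3 : seq (seq nat) :=
  [:: [:: 0; 1; 2]; [:: 0; 1; 3]; [:: 0; 1; 4]; [:: 0; 1; 5]; [:: 0; 2; 3];
      [:: 0; 2; 4]; [:: 0; 2; 5]; [:: 0; 3; 4]; [:: 0; 3; 5]; [:: 0; 4; 5]].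

Lemma shores3_nontrivial :
  all (fun X => (count [in X] (iota 0 6) != 1) && (count (fun i => i \notin X) (iota 0 6) != 1))
      shores3.
Proof. by []. Qed.

Definition tight_cut_freeb (g : seq edge) :=
  let P := pmatchings g in all (fun X => has (fun m => count (crosses X) m != 1) P) shores3.

Definition w5adj_nat (a b : nat) :=
  (a != b) && [|| a == 0, b == 0, (a + 5 - b) %% 5 == 1 | (b + 5 - a) %% 5 == 1].

Lemma w5adj_nat_sym a b : w5adj_nat a b = w5adj_nat b a.
Proof.
rewrite /w5adj_nat eq_sym; case: (b != a) => //=.
by case: (a == 0); case: (b == 0) => //=; rewrite orbC.
Qed.

Definition W5_code (pi : seq nat) : seq edge :=
  [seq e <- K6 | w5adj_nat (nth 0 pi e.1) (nth 0 pi e.2)].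

Lemma set2_eq (U : finType) (a b c d : U) :
  [set a; b] = [set c; d] -> (a = c /\ b = d) \/ (a = d /\ b = c).
Proof.
move=> eq_ab_cd.
have : a \in [set c; d] by rewrite -eq_ab_cd set21.
have : b \in [set c; d] by rewrite -eq_ab_cd set22.
have : c \in [set a; b] by rewrite eq_ab_cd set21.
have : d \in [set a; b] by rewrite eq_ab_cd set22.
rewrite !inE => /orP[]/eqP d_ab /orP[]/eqP c_ab /orP[]/eqP b_cd /orP[]/eqP a_cd;
  subst; by [left | right].
Qed.

Lemma mem_W5 (i j : 'I_6) : ([set i; j] \in W5) = w5adj_nat i j.
Proof.
apply/imsetP/idP => [[[a b]] | adj_ij]; last by exists (i, j); rewrite ?inE.
by rewrite inE /= => adj_ab /set2_eq[[-> ->] | [-> ->]]; rewrite // w5adj_nat_sym.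
Qed.

Lemma card_set2I (U : finType) (a b : U) (A : {set U}) :
  a != b -> #|[set a; b] :&: A| = (a \in A) + (b \in A).
Proof.
move=> neq_ab; have -> : [set a; b] :&: A = [set x in [seq x <- [:: a; b] | x \in A]].
  by apply/setP => x; rewrite !inE mem_filter !inE andbC.
rewrite cardsE (card_uniqP _) ?filter_uniq /= ?inE ?neq_ab //.
by case: (a \in A); case: (b \in A).
Qed.

Lemma card_map_uniq (A : eqType) (U : finType) (h : A -> U) (s : seq A) (B : {set U}) :
  uniq s -> {in s &, injective h} -> B =i map h s -> #|B| = size s.
Proof.
move=> s_uniq h_inj eq_B.
by rewrite (eq_card eq_B) (card_uniqP _) ?size_map ?map_inj_in_uniq.
Qed.

Section Coding.
Variables (T : finType) (x0 : T).
Hypothesis cardT : #|T| = 6.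
Implicit Types (E M : {set {set T}}) (x y : T) (e : edge).

Definition vtx (i : nat) : T := nth x0 (enum T) i.
Definition idx x : nat := index x (enum T).
Definition edge_set e : {set T} := [set vtx e.1; vtx e.2].
Definition code E : seq edge := [seq e <- K6 | edge_set e \in E].

Lemma idx_lt x : idx x < 6.
Proof. by rewrite -cardT cardE index_mem mem_enum. Qed.

Lemma idxK : cancel idx vtx.
Proof. by move=> x; rewrite /vtx /idx nth_index ?mem_enum. Qed.

Lemma vtxK i : i < 6 -> idx (vtx i) = i.
Proof. by move=> lt_i6; rewrite /idx index_uniq ?enum_uniq // -cardE cardT. Qed.

Lemma idx_inj : injective idx.
Proof. exact: can_inj idxK. Qed.

Lemma eq_vtx x i : i < 6 -> (x == vtx i) = (idx x == i).
Proof. by move=> lt_i6; rewrite -(inj_eq idx_inj) vtxK. Qed.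

Lemma mem_edge_set x e : e \in K6 -> (x \in edge_set e) = incident (idx x) e.
Proof.
rewrite mem_K6 => /andP[lt12 lt26]; have lt16 := ltn_trans lt12 lt26.
by rewrite !inE /incident !eq_vtx.
Qed.

Lemma edge_set_vtx_neq e : e \in K6 -> vtx e.1 != vtx e.2.
Proof.
rewrite mem_K6 => /andP[lt12 lt26].
by rewrite eq_vtx // vtxK ?(ltn_trans lt12) // ltn_eqF.
Qed.

Lemma card_edge_set e : e \in K6 -> #|edge_set e| = 2.
Proof. by move=> e_K6; rewrite cards2 edge_set_vtx_neq. Qed.

Lemma edge_set_inj : {in K6 &, injective edge_set}.
Proof.
move=> [a b] [c d] e_K6 f_K6 eq_ef; have := e_K6; have := f_K6.
rewrite !mem_K6 /= => /andP[lt_cd lt_d6] /andP[lt_ab lt_b6].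
have mem v : v < 6 -> incident v (a, b) = incident v (c, d).
  by move=> lt_v6; rewrite -(vtxK lt_v6) -!mem_edge_set // eq_ef.
have := mem a (ltn_trans lt_ab lt_b6); have := mem b lt_b6.
rewrite /incident /= !eqxx ?orbT => /esym hb /esym ha.
apply/eqP; rewrite xpair_eqE; lia.
Qed.

Definition sort_pair (u v : nat) : edge := (minn u v, maxn u v).

Lemma edge_set_sort_pair x y : x != y ->
  sort_pair (idx x) (idx y) \in K6 /\ edge_set (sort_pair (idx x) (idx y)) = [set x; y].
Proof.
rewrite -(inj_eq idx_inj) mem_K6 /edge_set /sort_pair /= => neq_xy.
have := idx_lt x; have := idx_lt y.
case: (leqP (idx x) (idx y)) => [le_xy|lt_yx] lt_y6 lt_x6; rewrite !idxK.
  by rewrite ltn_neqAle neq_xy le_xy lt_y6.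
by rewrite setUC lt_yx lt_x6.
Qed.

Lemma edge_set_onto (f : {set T}) : #|f| = 2 -> exists2 e, e \in K6 & f = edge_set e.
Proof.
move/eqP/cards2P => [x [y [neq_xy ->]]].
by have [e_K6 <-] := edge_set_sort_pair neq_xy; exists (sort_pair (idx x) (idx y)).
Qed.

Lemma mem_code E e : e \in K6 -> (e \in code E) = (edge_set e \in E).
Proof. by move=> e_K6; rewrite mem_filter e_K6 andbT. Qed.

Lemma code_sub {E} e : e \in code E -> e \in K6.
Proof. by rewrite mem_filter => /andP[]. Qed.

Lemma code_in_subseqs E : code E \in subseqs K6.
Proof. exact: mem_subseqs_filter. Qed.

Lemma code_uniq E : uniq (code E).
Proof. exact: filter_uniq K6_uniq. Qed.

Lemma card_code E (P : pred {set T}) : simple_edges E ->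
  #|[set f in E | P f]| = count (P \o edge_set) (code E).
Proof.
move=> simple_E; rewrite -size_filter.
apply: (@card_map_uniq _ _ edge_set _ [set f in E | P f]).
- exact: filter_uniq (code_uniq E).
- move=> e f; rewrite !(mem_filter (P \o edge_set)).
  by move=> /andP[_ /code_sub e_K6] /andP[_ /code_sub f_K6]; apply: edge_set_inj.
move=> f; rewrite inE; apply/andP/mapP => [[f_E Pf] | [e]].
  have [e e_K6 def_f] := edge_set_onto (simple_E f f_E).
  by exists e; rewrite // mem_filter /= -def_f Pf mem_code // -def_f f_E.
rewrite (mem_filter (P \o edge_set)) => /andP[Pe /[dup] /code_sub e_K6].
by rewrite mem_code // => e_E ->; split.
Qed.

Lemma card_idx (Q : pred nat) : #|[set x | Q (idx x)]| = count Q (iota 0 6).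
Proof.
rewrite -size_filter; apply: (@card_map_uniq _ _ vtx _ [set x | Q (idx x)]).
- exact: filter_uniq (iota_uniq 0 6).
- move=> i j /[!mem_filter] /andP[_] /[!mem_iota] /andP[_ lt_i6] /andP[_] /andP[_ lt_j6].
  by move=> eq_ij; rewrite -(vtxK lt_i6) eq_ij vtxK.
move=> x; rewrite inE; apply/idP/mapP => [Qx | [i]].
  by exists (idx x); rewrite ?idxK // mem_filter Qx mem_iota idx_lt.
by rewrite mem_filter mem_iota => /andP[Qi /andP[_ lt_i6]] ->; rewrite vtxK.
Qed.

Definition matching_of (m : seq edge) : {set {set T}} := [set f in map edge_set m].

Lemma perfect_matching_code E M : simple_edges E ->
  perfect_matching E M -> code M \in pmatchings (code E).
Proof.
move=> simple_E [sub_ME deg_M].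
have simple_M : simple_edges M by move=> f /(subsetP sub_ME)/simple_E.
have pm_M : perfect_matchingb (code M).
  apply/allP => v; rewrite mem_iota => /andP[_ lt_v6].
  rewrite -(deg_M (vtx v)) card_code //; apply/eqP/eq_in_count => e /code_sub e_K6.
  by rewrite /= mem_edge_set // vtxK.
rewrite mem_filter K6_pmsE mem_filter pm_M code_in_subseqs !andbT.
apply/allP => e e_M; have e_K6 := code_sub e_M; move: e_M.
by rewrite !mem_code //; apply: (subsetP sub_ME).
Qed.

Lemma perfect_matching_of E m : m \in pmatchings (code E) ->
  perfect_matching E (matching_of m) /\ code (matching_of m) = m.
Proof.
rewrite mem_filter => /andP[/allP m_E /K6_pmsP[pm_m def_m]].
have m_K6 e : e \in m -> e \in K6 by rewrite def_m mem_filter => /andP[].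
have code_m : code (matching_of m) = m.
  rewrite {2}def_m; apply: eq_in_filter => e e_K6; rewrite inE.
  apply/mapP/idP => [[f f_m /edge_set_inj-> //]|]; [exact: m_K6 | by exists e].
have simple_m : simple_edges (matching_of m).
  by move=> f; rewrite inE => /mapP[e /m_K6 e_K6 ->]; apply: card_edge_set.
split=> //; split.
  apply/subsetP => f; rewrite inE => /mapP[e e_m ->].
  by rewrite -mem_code ?m_K6 ?m_E.
move=> x; rewrite card_code // code_m.
have /allP/(_ (idx x)) := pm_m; rewrite mem_iota idx_lt => /(_ isT)/eqP <-.
by apply: eq_in_count => e /m_K6 e_K6; rewrite /= mem_edge_set.
Qed.

Lemma adj_vtx E u v : adjb (code E) u v -> adj E (vtx u) (vtx v).
Proof.
rewrite /adj /adjb => /orP[] /[dup] /code_sub e_K6; rewrite mem_code //.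
by rewrite /edge_set setUC.
Qed.

Lemma adjb_idx E x y : simple_edges E -> adj E x y -> adjb (code E) (idx x) (idx y).
Proof.
rewrite /adj => simple_E E_xy; have neq_xy : x != y.
  by apply: contraTneq E_xy => <-; apply/negP => /simple_E; rewrite setUid cards1.
have [e_K6 def_e] := edge_set_sort_pair neq_xy.
move: e_K6 def_e; rewrite /adjb /sort_pair.
case: leqP => _ e_K6 def_e; last rewrite orbC.
  by rewrite (mem_code _ e_K6) def_e E_xy.
by rewrite (mem_code _ e_K6) def_e E_xy.
Qed.

Lemma connectedb_code E : simple_edges E -> connected E -> connectedb (code E).
Proof.
move=> simple_E conn_E; apply/allP => v; rewrite mem_iota => /andP[_ lt_v6].
have /connectP[p path_p last_p] := conn_E (vtx 0) (vtx v).
move: last_p; case/shortenP: path_p => q path_q uniq_q _ last_q.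
have size_q : size q <= 5.
  by have := max_card (mem (vtx 0 :: q)); rewrite (card_uniqP uniq_q) cardT.
apply: (reach_monotone size_q).
have path_idx : path (adjb (code E)) 0 (map idx q).
  by rewrite -(@vtxK 0) //; apply: (homo_path _ path_q) => a b; apply: adjb_idx.
rewrite -(vtxK lt_v6) last_q -(last_map idx) (@vtxK 0) // -(size_map idx).
exact: mem_reach_path.
Qed.

Lemma connected_of_code E : connectedb (code E) -> connected E.
Proof.
move=> reach_E x y.
have conn0 z : connect (adj E) (vtx 0) z.
  rewrite -(idxK z); apply: (reach_ind (P := fun u => connect (adj E) (vtx 0) (vtx u))) => //.
  - by move=> u v conn_u /adj_vtx/connect1; apply: connect_trans.
  by apply: (allP reach_E); rewrite mem_iota idx_lt.
have adj_sym : connect_sym (adj E) by apply: sym_connect_sym => a b; rewrite /adj setUC.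
by apply: connect_trans (conn0 y); rewrite adj_sym.
Qed.

Lemma matching_coveredP E : simple_edges E ->
  reflect (matching_covered E) (matching_coveredb (code E)).
Proof.
move=> simple_E; apply: (iffP andP).
  case=> /allP cov_E /connected_of_code conn_E; split=> //; split; first by rewrite cardT.
  move=> f f_E; have [e e_K6 def_f] := edge_set_onto (simple_E f f_E).
  rewrite def_f -mem_code // in f_E.
  have /hasP[m m_pm e_m] := cov_E e f_E.
  have [pm_m code_m] := perfect_matching_of m_pm.
  by exists (matching_of m); rewrite def_f -mem_code // code_m.
case=> /(connectedb_code simple_E) conn_E [_ mc_E]; split=> //; apply/allP => e e_E.
have e_K6 := code_sub e_E; rewrite mem_code // in e_E.
have [M [pm_M e_M]] := mc_E _ e_E.
by apply/hasP; exists (code M); rewrite ?mem_code ?perfect_matching_code.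
Qed.

Lemma simple_setD1 E f : simple_edges E -> simple_edges (E :\ f).
Proof. by move=> simple_E f' /setD1P[_ /simple_E]. Qed.

Lemma code_setD1 E e : e \in K6 -> code (E :\ edge_set e) = rem e (code E).
Proof.
move=> e_K6; rewrite rem_filter ?code_uniq // /code -(filter_predI (predC1 e)).
apply: eq_in_filter => f f_K6; rewrite /= in_setD1 (inj_in_eq edge_set_inj) //.
Qed.

Lemma removableP E e : simple_edges E -> e \in K6 ->
  removable E (edge_set e) <-> e \in removables (code E).
Proof.
move=> simple_E e_K6; rewrite mem_removables ?code_uniq // -code_setD1 // mem_code //.
have mcP := matching_coveredP (simple_setD1 (f := edge_set e) simple_E).
by split=> [[E_e /mcP ->] | /andP[E_e /mcP mc]]; rewrite ?E_e.
Qed.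

Lemma removable_doubletonP E e e' : simple_edges E -> e \in K6 -> e' \in K6 ->
  removable_doubleton E (edge_set e) (edge_set e') <->
  (e, e') \in doubletons (code E) (removables (code E)).
Proof.
move=> simple_E e_K6 e'_K6.
have simple_e := simple_setD1 (f := edge_set e) simple_E.
have mcP := matching_coveredP simple_e.
have mc'P := matching_coveredP (simple_setD1 (f := edge_set e') simple_E).
have mc2P := matching_coveredP (simple_setD1 (f := edge_set e') simple_e).
rewrite /removable_doubleton mem_doubletons ?code_uniq // -!code_setD1 //.
rewrite (mem_code _ e_K6) (mem_code _ e'_K6) [edge_set e == _](inj_in_eq edge_set_inj) //.
split=> [[E_e [E_e' [neq [/mc2P mc [nmc nmc']]]]] |].
  apply/and5P; split; [exact: E_e | exact: E_e' | exact: neq | exact: mc |].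
  exact/andP/(conj (introN mcP nmc) (introN mc'P nmc')).
case/and5P=> E_e E_e' neq /mc2P mc /andP[/mcP nmc /mc'P nmc'].
exact: (conj E_e (conj E_e' (conj neq (conj mc (conj nmc nmc'))))).
Qed.

Lemma wheel_likeP E : simple_edges E -> wheel_like E <-> wheel_likeb (code E).
Proof.
move=> simple_E; split.
  case=> h [rem_h dbl_h]; apply/hasP; exists (idx h); first by rewrite mem_iota idx_lt.
  apply/andP; split; apply/allP.
    move=> e /[dup] e_R; rewrite mem_removables ?code_uniq // => /andP[/code_sub e_K6 _].
    by rewrite -mem_edge_set //; apply/rem_h/(removableP simple_E e_K6).
  move=> [e e'] /[dup] ee'_D; rewrite mem_doubletons ?code_uniq //.
  case/and3P=> /code_sub e_K6 /code_sub e'_K6 _.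
  by rewrite -!mem_edge_set //; apply/orP/dbl_h/(removable_doubletonP simple_E e_K6 e'_K6).
case/hasP=> h; rewrite mem_iota => /andP[_ lt_h6] /andP[/allP R_h /allP D_h].
exists (vtx h); split.
  move=> f /[dup] rem_f [f_E _]; have [e e_K6 def_f] := edge_set_onto (simple_E f f_E).
  rewrite def_f mem_edge_set // vtxK //; apply: R_h.
  by apply/(removableP simple_E e_K6); rewrite -def_f.
move=> f f' /[dup] dbl [f_E [f'_E _]].
have [e e_K6 def_f] := edge_set_onto (simple_E f f_E).
have [e' e'_K6 def_f'] := edge_set_onto (simple_E f' f'_E).
rewrite def_f def_f' !mem_edge_set // vtxK //; apply/orP; apply: (D_h (e, e')).
by apply/(removable_doubletonP simple_E e_K6 e'_K6); rewrite -def_f -def_f'.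
Qed.

Lemma crosses_edge_set e (X : seq nat) : e \in K6 ->
  (#|edge_set e :&: [set x | idx x \in X]| == 1) = crosses X e.
Proof.
move=> e_K6; have := e_K6; rewrite mem_K6 => /andP[lt12 lt26].
rewrite card_set2I ?edge_set_vtx_neq // !inE !vtxK ?(ltn_trans lt12) //.
by rewrite /crosses; case: (e.1 \in X); case: (e.2 \in X).
Qed.

Lemma tight_cut_freeb_code E : simple_edges E ->
  (forall X, tight_cut E X -> trivial_cut X) -> tight_cut_freeb (code E).
Proof.
move=> simple_E trivial_E; apply/allP => X X_shore.
have /andP[ntX ntCX] := allP shores3_nontrivial X X_shore.
apply: contraT => /hasPn crossing1.
pose XT := [set x | idx x \in X].
have /trivial_E[] : tight_cut E XT.
  move=> M pm_M; have /negPn/eqP <- := crossing1 _ (perfect_matching_code simple_E pm_M).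
  have -> : M :&: cut E XT = [set f in M | #|f :&: XT| == 1].
    by apply/setP => f; rewrite !inE; case: (boolP (f \in M)) => //= /(subsetP pm_M.1) ->.
  have simple_M : simple_edges M by move=> f /(subsetP pm_M.1)/simple_E.
  by rewrite card_code //; apply: eq_in_count => e /code_sub e_K6; apply: crosses_edge_set.
  by rewrite card_idx => /eqP cX; rewrite cX in ntX.
have -> : ~: XT = [set x | idx x \notin X] by apply/setP => x; rewrite !inE.
by rewrite (card_idx (fun i => i \notin X)) => /eqP cX; rewrite cX in ntCX.
Qed.

Lemma isomorphic_W5_code E pi : simple_edges E ->
  pi \in permutations (iota 0 6) -> code E = W5_code pi -> isomorphic E W5.
Proof.
move=> simple_E; rewrite mem_permutations => perm_pi code_E.
have size_pi : size pi = 6 by rewrite (perm_size perm_pi) size_iota.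
have uniq_pi : uniq pi by rewrite (perm_uniq perm_pi) iota_uniq.
have pi_lt i : i < 6 -> nth 0 pi i < 6.
  move=> lt_i6; have : nth 0 pi i \in iota 0 6 by rewrite -(perm_mem perm_pi) mem_nth ?size_pi.
  by rewrite mem_iota.
pose phi x : 'I_6 := inord (nth 0 pi (idx x)).
have phiE x : phi x = nth 0 pi (idx x) :> nat by rewrite inordK ?pi_lt ?idx_lt.
exists phi; split.
  apply: inj_card_bij; last by rewrite card_ord cardT.
  move=> x y /(congr1 (@nat_of_ord 6)); rewrite !phiE => /eqP.
  by rewrite nth_uniq ?size_pi ?idx_lt // => /eqP; apply: idx_inj.
move=> x y; rewrite mem_W5 !phiE.
have [<-|neq_xy] := eqVneq x y.
  by rewrite /w5adj_nat eqxx; apply/negP => /simple_E; rewrite setUid cards1.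
have [e_K6 def_e] := edge_set_sort_pair neq_xy.
rewrite -def_e -mem_code // code_E mem_filter e_K6 andbT /sort_pair.
by case: leqP => _ //; rewrite w5adj_nat_sym.
Qed.

Lemma W5_code_of_isomorphic E : isomorphic E W5 ->
  exists2 pi, pi \in permutations (iota 0 6) & code E = W5_code pi.
Proof.
case=> phi [/bij_inj phi_inj phi_E].
pose pi := [seq val (phi (vtx i)) | i <- iota 0 6].
have uniq_pi : uniq pi.
  rewrite map_inj_in_uniq ?iota_uniq // => i j /[!mem_iota] /andP[_ lt_i6] /andP[_ lt_j6].
  by move/val_inj/phi_inj => eq_ij; rewrite -(vtxK lt_i6) eq_ij vtxK.
have sub_pi : {subset pi <= iota 0 6}.
  by move=> _ /mapP[i _ ->]; rewrite mem_iota ltn_ord.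
have [_ eq_pi] := uniq_min_size uniq_pi sub_pi (eq_leq (esym (size_map _ _))).
exists pi; first by rewrite mem_permutations uniq_perm ?iota_uniq.
apply: eq_in_filter => e; rewrite mem_K6 => /andP[lt12 lt26].
by rewrite /edge_set phi_E mem_W5 !(nth_map 0) ?size_iota ?nth_iota ?(ltn_trans lt12).
Qed.

End Coding.

Lemma six_vertex_check :
  all (fun g => has (fun pi => g == W5_code pi) (permutations (iota 0 6)))
      [seq g <- [seq g <- [seq g <- subseqs K6 | matching_coveredb g] | tight_cut_freeb g]
           | wheel_likeb g].
Proof. by vm_compute. Qed.

Lemma W5_relabellings_wheel_like :
  all (fun pi => wheel_likeb (W5_code pi)) (permutations (iota 0 6)).
Proof. by vm_compute. Qed.

Theorem mainTheorem6 (T : finType) (E : {set {set T}})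
  (Hsimple : simple_edges E) (H6 : #|T| = 6)
  (Hplanar : planar E) (Hbrick : brick E) :
  wheel_like E <-> isomorphic E W5.
Proof.
have /card_gt0P[x0 _] : 0 < #|T| by rewrite H6.
have [mc_E [_ tight_E]] := Hbrick.
rewrite (wheel_likeP x0 H6 Hsimple).
split=> [wl_E | /(W5_code_of_isomorphic x0 H6)[pi pi_perm ->]]; last first.
  exact: (allP W5_relabellings_wheel_like).
have := allP six_vertex_check (code x0 E).
rewrite !mem_filter code_in_subseqs (introT (matching_coveredP x0 H6 Hsimple) mc_E).
rewrite (tight_cut_freeb_code x0 H6 Hsimple tight_E) wl_E.
by case/(_ isT)/hasP=> pi pi_perm /eqP; apply: isomorphic_W5_code.
Qed.
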